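(* Let $x\ne y$ be points of $\partial\mathbb{H}^2$ and let $r,s$ be two distinct vertices of the ladder $\mathcal{L}(x,y)$. Then $\mathcal{L}(r,s)\subseteq\mathcal{L}(x,y)$.
   Context: The Farey graph $\mathcal{F}$ has vertex set $\mathbb{Q}\cup\{\infty\}$ (vertices $p/q$ in lowest terms, $\infty=1/0$), with $p/q$ and $r/s$ adjacent iff $|ps-qr|=1$. It is embedded in $\overline{\mathbb{H}}=\mathbb{H}^2\cup\partial\mathbb{H}^2$ (upper half-plane model, $\partial\mathbb{H}^2=\mathbb{R}\cup\{\infty\}$) with edges realized as hyperbolic geodesics; the closures of the complementary regions are ideal triangles called Farey triangles. For distinct $x,y\in\partial\mathbb{H}^2$, the ladder $\mathcal{L}(x,y)$ is the union of all Farey triangles whose interior meets the hyperbolic geodesic from $x$ to $y$ (if $x,y$ are adjacent vertices this is empty). *)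

From Stdlib Require Import Reals ZArith.
Open Scope R_scope.

(* Points of the boundary of H^2 (upper half-plane model): R ∪ {∞}. *)
Inductive bpt : Type := Fin (a : R) | Inf.

(* Points of closed H^2 = H^2 ∪ ∂H^2.  [HIn u v] stands for u + i v
   (it is a point of H^2 only when v > 0; all predicates below require it). *)
Inductive hpt : Type := HIn (u v : R) | HBd (p : bpt).

(* For distinct boundary points a, b, [sidefun a b u v] is a real function on
   H^2 whose zero set is the hyperbolic geodesic with endpoints a, b and whose
   sign distinguishes the two sides of it:
     a, b finite : |z|^2 - (a+b) Re z + a b   (zero on the semicircle on [a,b])
     one of them ∞, the other c finite : Re z - c (zero on the vertical line). *)
Definition sidefun (a b : bpt) (u v : R) : R :=
  match a, b with
  | Fin a, Fin b => u * u + v * v - (a + b) * u + a * b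
  | Fin a, Inf => u - a
  | Inf, Fin b => u - b
  | Inf, Inf => 0
  end.

(* Sign of (the continuous extension of) [sidefun a b] at a boundary point c
   not equal to a, b: a positive multiple of the limiting value. *)
Definition sideval (a b c : bpt) : R :=
  match a, b, c with
  | Fin a, Fin b, Fin c => (c - a) * (c - b)
  | Fin a, Fin b, Inf => 1
  | Fin a, Inf, Fin c => c - a
  | Inf, Fin b, Fin c => c - b
  | _, _, _ => 0
  end.

Definition on_geodesic (x y : bpt) (u v : R) : Prop :=
  0 < v /\ sidefun x y u v = 0.

Definition in_tri_interior (a b c : bpt) (u v : R) : Prop :=
  0 < v /\
  sidefun a b u v * sideval a b c > 0 /\
  sidefun b c u v * sideval b c a > 0 /\
  sidefun c a u v * sideval c a b > 0.

Definition in_closed_tri (a b c : bpt) (P : hpt) : Prop :=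
  match P with
  | HIn u v =>
      0 < v /\
      sidefun a b u v * sideval a b c >= 0 /\
      sidefun b c u v * sideval b c a >= 0 /\
      sidefun c a u v * sideval c a b >= 0
  | HBd p => p = a \/ p = b \/ p = c
  end.

Definition farey_pair (pq : Z * Z) : Prop :=
  let (p, q) := pq in
  ((0 < q)%Z /\ Z.gcd p q = 1%Z) \/ (p = 1%Z /\ q = 0%Z).

Definition vtx (pq : Z * Z) : bpt :=
  let (p, q) := pq in
  if Z.eqb q 0 then Inf else Fin (IZR p / IZR q).

Definition farey_adj (pq rs : Z * Z) : Prop :=
  let (p, q) := pq in let (r, s) := rs in Z.abs (p * s - q * r) = 1%Z.

Definition is_farey_vertex (r : bpt) : Prop :=
  exists pq, farey_pair pq /\ r = vtx pq.

Definition is_farey_triangle (a b c : Z * Z) : Prop :=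
  farey_pair a /\ farey_pair b /\ farey_pair c /\
  farey_adj a b /\ farey_adj b c /\ farey_adj c a.

Definition ladder (x y : bpt) (P : hpt) : Prop :=
  exists a b c : Z * Z,
    is_farey_triangle a b c /\
    (exists u v, on_geodesic x y u v /\ in_tri_interior (vtx a) (vtx b) (vtx c) u v) /\
    in_closed_tri (vtx a) (vtx b) (vtx c) P.

From Stdlib Require Import Reals ZArith Lra Lia Psatz.
Open Scope R_scope.

(** Lift a boundary point [a] to the isotropic vector [(1, a, a²)] of the
    quadratic form [y² - x z] on [R³] ([∞] to [(0, 0, 1)]) and [u + i v] to
    [(1, u, u² + v²)].  Then the side of the geodesic [ab] on which a point lies
    is the sign of [det(A, B, ·)], the points of the geodesic [xy] are, up to
    scaling, the positive combinations of [X] and [Y], and for Farey vertices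
    [det(A, B, C)] is the product of the integer determinants [p s - q r], so
    that a Plücker relation shows that Farey edges never cross.

    Let [T] be a Farey triangle of [L(r, s)].  For each edge of [T], [x] or [y]
    lies strictly on the side of [T]: otherwise every ladder triangle of [xy],
    not crossing that edge, lies on the far side, hence so do [r], [s] and the
    geodesic [rs], which meets the interior of [T].  Since [x] and [y] lie on
    the circle, their barycentric coordinates with respect to [T] obey a
    quadratic relation which then yields a positive combination of [X] and [Y]
    with all three coordinates positive: a point of the geodesic [xy] in the
    interior of [T]. *)

Record vec3 := Vec3 { vx : R; vy : R; vz : R }.

Definition det3 (A B C : vec3) : R :=
  vx A * (vy B * vz C - vz B * vy C) - vy A * (vx B * vz C - vz B * vx C)
  + vz A * (vx B * vy C - vy B * vx C).

Definition scale (k : R) (P : vec3) : vec3 := Vec3 (k * vx P) (k * vy P) (k * vz P).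

Definition comb (l : R) (P : vec3) (m : R) (Q : vec3) : vec3 :=
  Vec3 (l * vx P + m * vx Q) (l * vy P + m * vy Q) (l * vz P + m * vz Q).

(* Twice the polar form of [y² - x z]. *)
Definition lorentz (A B : vec3) : R := 2 * vy A * vy B - vx A * vz B - vz A * vx B.

Definition bvec (c : bpt) : vec3 :=
  match c with Fin a => Vec3 1 a (a * a) | Inf => Vec3 0 0 1 end.

Definition hvec (u v : R) : vec3 := Vec3 1 u (u * u + v * v).

(* [det(A, B, C)²] times the barycentric coordinate of [X] at the vertex [C];
   it is positive iff [X] lies strictly on the side of the line [AB] of [C]. *)
Definition bary (A B C X : vec3) : R := det3 A B X * det3 A B C.

Definition inside (A B C Z : vec3) : Prop :=
  0 < bary A B C Z /\ 0 < bary B C A Z /\ 0 < bary C A B Z.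

Lemma bary_comb A B C l P m Q :
  bary A B C (comb l P m Q) = l * bary A B C P + m * bary A B C Q.
Proof. unfold bary, det3; simpl; ring. Qed.

Lemma det3_scale a b c A B C :
  det3 (scale a A) (scale b B) (scale c C) = a * b * c * det3 A B C.
Proof. unfold det3; simpl; ring. Qed.

Lemma bary_cramer A B C A' B' C' Z :
  det3 A' B' C' ^ 2 * bary A B C Z =
  bary B' C' A' Z * bary A B C A' + bary C' A' B' Z * bary A B C B'
  + bary A' B' C' Z * bary A B C C'.
Proof. unfold bary, det3; ring. Qed.

Lemma sidefun_det a b : a <> b ->
  exists k, k <> 0 /\
    (forall u v, sidefun a b u v = k * det3 (bvec a) (bvec b) (hvec u v)) /\
    (forall c, sideval a b c = k * det3 (bvec a) (bvec b) (bvec c)).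
Proof.
  intro Hab; destruct a as [a|], b as [b|].
  - assert (b - a <> 0) by (intro; apply Hab; f_equal; lra).
    exists (/ (b - a)); split; [now apply Rinv_neq_0_compat|].
    split; [intros u v|intros [c|]]; unfold det3; simpl; field; assumption.
  - exists (-1); split; [lra|].
    split; [intros u v|intros [c|]]; unfold det3; simpl; ring.
  - exists 1; split; [lra|].
    split; [intros u v|intros [c|]]; unfold det3; simpl; ring.
  - congruence.
Qed.

Lemma side_sign_bary a b c u v : a <> b ->
  (sidefun a b u v * sideval a b c > 0 <->
   0 < bary (bvec a) (bvec b) (bvec c) (hvec u v)).
Proof.
  intro Hab; destruct (sidefun_det a b Hab) as (k & Hk & Hf & Hs).
  rewrite Hf, Hs; unfold bary.
  assert (0 < k * k) by nra.
  replace (k * _ * (k * _)) with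
    (k * k * (det3 (bvec a) (bvec b) (hvec u v) * det3 (bvec a) (bvec b) (bvec c)))
    by ring.
  split; intro; nra.
Qed.

Lemma in_tri_interior_iff a b c u v : a <> b -> b <> c -> c <> a ->
  (in_tri_interior a b c u v <-> 0 < v /\ inside (bvec a) (bvec b) (bvec c) (hvec u v)).
Proof.
  intros; unfold in_tri_interior, inside.
  rewrite !side_sign_bary by assumption; reflexivity.
Qed.

Lemma on_geodesic_iff x y u v : x <> y ->
  (on_geodesic x y u v <-> 0 < v /\ det3 (bvec x) (bvec y) (hvec u v) = 0).
Proof.
  intro Hxy; destruct (sidefun_det x y Hxy) as (k & Hk & Hf & _).
  unfold on_geodesic; rewrite Hf.
  split; intros [Hv H]; split; try assumption.
  - destruct (Rmult_integral _ _ H); tauto.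
  - rewrite H; ring.
Qed.

Lemma geodesic_point_comb x y u v : x <> y -> on_geodesic x y u v ->
  exists l m, 0 < l /\ 0 < m /\ hvec u v = comb l (bvec x) m (bvec y).
Proof.
  intros Hxy [Hv Hs]; destruct x as [x|], y as [y|]; simpl in Hs.
  - assert (Hne : y - x <> 0) by (intro; apply Hxy; f_equal; lra).
    assert (Hd : 0 < (y - x) * (y - x)) by (now apply Rsqr_pos_lt).
    exists ((y - u) / (y - x)), ((u - x) / (y - x)).
    assert (Hl : (y - u) / (y - x) * ((y - x) * (y - x)) = (y - u) * (y - x))
      by (field; assumption).
    assert (Hm : (u - x) / (y - x) * ((y - x) * (y - x)) = (u - x) * (y - x))
      by (field; assumption).
    assert (0 < v * v) by nra.
    assert (0 < (y - u) * (y - x) /\ 0 < (u - x) * (y - x)) as [] by (split; nra).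
    split; [|split]; [nra|nra|].
    unfold hvec, comb; simpl; f_equal; try (field; assumption).
    replace (u * u + v * v) with ((x + y) * u - x * y) by lra; field; assumption.
  - exists 1, (v * v); split; [lra|split; [nra|]].
    unfold hvec, comb; simpl; f_equal; nra.
  - exists (v * v), 1; split; [nra|split; [lra|]].
    unfold hvec, comb; simpl; f_equal; nra.
  - congruence.
Qed.

Lemma on_geodesic_comb x y l m u v : x <> y -> 0 < v ->
  hvec u v = comb l (bvec x) m (bvec y) -> on_geodesic x y u v.
Proof.
  intros Hxy Hv E; apply on_geodesic_iff; [assumption|split; [assumption|]].
  rewrite E; unfold det3; simpl; ring.
Qed.

Lemma pos_square_root t : 0 < t -> exists s, 0 < s /\ s * s = t.
Proof.
  intro; exists (sqrt t); split; [now apply sqrt_lt_R0|apply sqrt_sqrt; lra].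
Qed.

Lemma comb_geodesic_point x y l m : x <> y -> 0 < l -> 0 < m ->
  exists k u v, 0 < k /\ on_geodesic x y u v /\
    hvec u v = comb (k * l) (bvec x) (k * m) (bvec y).
Proof.
  intros Hxy Hl Hm.
  enough (exists k u v, 0 < k /\ 0 < v /\
            hvec u v = comb (k * l) (bvec x) (k * m) (bvec y)) as (k & u & v & Hk & Hv & E).
  { exists k, u, v; split; [|split]; [assumption| |assumption].
    eapply on_geodesic_comb; eassumption. }
  destruct x as [x|], y as [y|].
  - assert (Hxy' : x - y <> 0) by (intro; apply Hxy; f_equal; lra).
    destruct (pos_square_root (l * m * ((x - y) * (x - y)))) as (s & Hs0 & Hs).
    { apply Rmult_lt_0_compat; [nra|now apply Rsqr_pos_lt]. }
    exists (/ (l + m)), ((l * x + m * y) / (l + m)), (s / (l + m)).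
    split; [apply Rinv_0_lt_compat; lra|split; [apply Rdiv_lt_0_compat; lra|]].
    unfold hvec, comb; simpl; f_equal; try (field; lra).
    replace (s / (l + m) * (s / (l + m))) with (s * s / ((l + m) * (l + m)))
      by (field; lra).
    rewrite Hs; field; lra.
  - destruct (pos_square_root (m / l)) as (s & Hs0 & Hs).
    { now apply Rdiv_lt_0_compat. }
    exists (/ l), x, s; split; [now apply Rinv_0_lt_compat|split; [assumption|]].
    unfold hvec, comb; simpl; f_equal; rewrite ?Hs; field; lra.
  - destruct (pos_square_root (l / m)) as (s & Hs0 & Hs).
    { now apply Rdiv_lt_0_compat. }
    exists (/ m), y, s; split; [now apply Rinv_0_lt_compat|split; [assumption|]].
    unfold hvec, comb; simpl; f_equal; rewrite ?Hs; field; lra.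
  - congruence.
Qed.

Lemma lorentz_sym A B : lorentz A B = lorentz B A.
Proof. unfold lorentz; ring. Qed.

Lemma lorentz_bvec_self a : lorentz (bvec a) (bvec a) = 0.
Proof. destruct a; unfold lorentz; simpl; ring. Qed.

Lemma lorentz_bvec_nonpos a b : lorentz (bvec a) (bvec b) <= 0.
Proof.
  destruct a as [a|], b as [b|]; unfold lorentz; simpl; try lra.
  pose proof (pow2_ge_0 (a - b)); nra.
Qed.

Lemma lorentz_bvec_neg a b : a <> b -> lorentz (bvec a) (bvec b) < 0.
Proof.
  intro Hab; destruct a as [a|], b as [b|]; unfold lorentz; simpl; try lra.
  - assert (0 < (a - b) * (a - b)) by (apply Rsqr_pos_lt; intro; apply Hab; f_equal; lra).
    nra.
  - congruence.
Qed.

Lemma lorentz_bary A B C X P :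
  det3 A B C ^ 2 * lorentz P X =
  bary B C A X * lorentz P A + bary C A B X * lorentz P B + bary A B C X * lorentz P C.
Proof. unfold bary, det3, lorentz; ring. Qed.

Lemma lorentz_bary_self A B C X :
  det3 A B C ^ 4 * lorentz X X =
  bary B C A X ^ 2 * lorentz A A + bary C A B X ^ 2 * lorentz B B
  + bary A B C X ^ 2 * lorentz C C
  + 2 * (bary B C A X * bary C A B X * lorentz A B + bary C A B X * bary A B C X * lorentz B C
         + bary A B C X * bary B C A X * lorentz C A).
Proof. unfold bary, det3, lorentz; ring. Qed.

(* Coordinates [x_i] of a point [X] of the circle with respect to an ideal
   triangle [V_1 V_2 V_3], with weights [w_ij = - lorentz V_i V_j]: the first
   condition says [lorentz X X = 0], the others [lorentz V_i X <= 0]. *)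
Definition circle_coords (w12 w23 w31 x1 x2 x3 : R) : Prop :=
  x1 * x2 * w12 + x2 * x3 * w23 + x3 * x1 * w31 = 0 /\
  0 <= x2 * w12 + x3 * w31 /\ 0 <= x1 * w12 + x3 * w23 /\ 0 <= x1 * w31 + x2 * w23.

Lemma circle_coords_bvec a b c x :
  let A := bvec a in let B := bvec b in let C := bvec c in let X := bvec x in
  circle_coords (- lorentz A B) (- lorentz B C) (- lorentz C A)
    (bary B C A X) (bary C A B X) (bary A B C X).
Proof.
  intros A B C X.
  pose proof (lorentz_bary_self A B C X) as Hself.
  pose proof (lorentz_bary A B C X A) as HA.
  pose proof (lorentz_bary A B C X B) as HB.
  pose proof (lorentz_bary A B C X C) as HC.
  rewrite (lorentz_sym A C) in HA; rewrite (lorentz_sym B A) in HB;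
    rewrite (lorentz_sym C B) in HC.
  unfold A, B, C, X in *; rewrite !lorentz_bvec_self in *.
  pose proof (lorentz_bvec_nonpos a x); pose proof (lorentz_bvec_nonpos b x);
    pose proof (lorentz_bvec_nonpos c x).
  assert (0 <= det3 (bvec a) (bvec b) (bvec c) ^ 2) by (apply pow2_ge_0).
  unfold circle_coords; repeat split; nra.
Qed.

Lemma circle_coords_nonpos w12 w23 w31 x1 x2 x3 :
  0 < w12 -> 0 < w23 -> 0 < w31 -> circle_coords w12 w23 w31 x1 x2 x3 ->
  x1 <= 0 \/ x2 <= 0 \/ x3 <= 0.
Proof.
  intros H12 H23 H31 [Hiso _].
  destruct (Rle_or_lt x1 0); [now left|]; destruct (Rle_or_lt x2 0); [now right; left|].
  destruct (Rle_or_lt x3 0); [now right; right|]; exfalso.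
  assert (0 < x1 * x2 * w12) by (repeat apply Rmult_lt_0_compat; assumption).
  assert (0 < x2 * x3 * w23) by (repeat apply Rmult_lt_0_compat; assumption).
  assert (0 < x3 * x1 * w31) by (repeat apply Rmult_lt_0_compat; assumption).
  lra.
Qed.

Lemma circle_coords_cap_pos w12 w23 w31 x1 x2 x3 :
  0 < w12 -> 0 < w23 -> 0 < w31 -> circle_coords w12 w23 w31 x1 x2 x3 ->
  x1 <= 0 -> 0 < x2 -> 0 < x2 * w23 + x1 * w31.
Proof.
  intros H12 H23 H31 (Hiso & _ & Hcap2 & Hcap3) Hx1 Hx2.
  destruct (Rle_lt_or_eq_dec _ _ Hx1) as [Hneg| ->]; [|nra].
  assert (Hx3 : 0 < x3) by nra.
  assert (x3 * (x2 * w23 + x1 * w31) = (- x1) * x2 * w12) by lra.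
  assert (0 < (- x1) * x2 * w12) by (repeat apply Rmult_lt_0_compat; lra).
  nra.
Qed.

Lemma positive_comb_of_caps w12 w23 w31 x1 x2 x3 y1 y2 y3 :
  0 < w12 -> 0 < w23 -> 0 < w31 ->
  circle_coords w12 w23 w31 x1 x2 x3 -> circle_coords w12 w23 w31 y1 y2 y3 ->
  x1 <= 0 -> y2 <= 0 -> 0 < x2 -> 0 < y1 -> (0 < x3 \/ 0 < y3) ->
  exists l m, 0 < l /\ 0 < m /\
    0 < l * x1 + m * y1 /\ 0 < l * x2 + m * y2 /\ 0 < l * x3 + m * y3.
Proof.
  intros H12 H23 H31 Hx Hy Hx1 Hy2 Hx2 Hy1 H3.
  assert (Kx := circle_coords_cap_pos _ _ _ _ _ _ H12 H23 H31 Hx Hx1 Hx2).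
  assert (Ky : 0 < y1 * w31 + y2 * w23).
  { apply (circle_coords_cap_pos w12 w31 w23 y2 y1 y3); try assumption.
    unfold circle_coords in *; lra. }
  destruct Hx as (_ & _ & Hx3 & _); destruct Hy as (_ & Hy3 & _ & _).
  assert (0 <= x3) by nra; assert (0 <= y3) by nra.
  assert (Hcross : 0 < x2 * y1 - x1 * y2).
  { assert (0 <= - (x1 * w31)) by nra; assert (0 <= - (y2 * w23)) by nra.
    assert (- (x1 * w31) * - (y2 * w23) < x2 * w23 * (y1 * w31)) by nra.
    nra. }
  (* With these weights the first two coordinates both equal [x2 y1 - x1 y2]. *)
  exists (y1 - y2), (x2 - x1); repeat split; nra.
Qed.

Lemma positive_comb_of_circle_coords w12 w23 w31 x1 x2 x3 y1 y2 y3 :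
  0 < w12 -> 0 < w23 -> 0 < w31 ->
  circle_coords w12 w23 w31 x1 x2 x3 -> circle_coords w12 w23 w31 y1 y2 y3 ->
  (0 < x1 \/ 0 < y1) -> (0 < x2 \/ 0 < y2) -> (0 < x3 \/ 0 < y3) ->
  exists l m, 0 < l /\ 0 < m /\
    0 < l * x1 + m * y1 /\ 0 < l * x2 + m * y2 /\ 0 < l * x3 + m * y3.
Proof.
  intros H12 H23 H31 Hx Hy H1 H2 H3.
  assert (Cx := Hx); assert (Cy := Hy); unfold circle_coords in Cx, Cy.
  destruct (circle_coords_nonpos _ _ _ _ _ _ H12 H23 H31 Hx) as [X|[X|X]];
  destruct (circle_coords_nonpos _ _ _ _ _ _ H12 H23 H31 Hy) as [Y|[Y|Y]];
  try (exfalso; lra).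
  (* Permute the indices so that the nonpositive coordinates of [x] and [y]
     come first and second respectively. *)
  - destruct (positive_comb_of_caps w12 w23 w31 x1 x2 x3 y1 y2 y3)
      as (l & m & ?); unfold circle_coords; try lra.
    exists l, m; lra.
  - destruct (positive_comb_of_caps w31 w23 w12 x1 x3 x2 y1 y3 y2)
      as (l & m & ?); unfold circle_coords; try lra.
    exists l, m; lra.
  - destruct (positive_comb_of_caps w12 w31 w23 x2 x1 x3 y2 y1 y3)
      as (l & m & ?); unfold circle_coords; try lra.
    exists l, m; lra.
  - destruct (positive_comb_of_caps w23 w31 w12 x2 x3 x1 y2 y3 y1)
      as (l & m & ?); unfold circle_coords; try lra.
    exists l, m; lra.
  - destruct (positive_comb_of_caps w31 w12 w23 x3 x1 x2 y3 y1 y2)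
      as (l & m & ?); unfold circle_coords; try lra.
    exists l, m; lra.
  - destruct (positive_comb_of_caps w23 w12 w31 x3 x2 x1 y3 y2 y1)
      as (l & m & ?); unfold circle_coords; try lra.
    exists l, m; lra.
Qed.

Lemma chord_meets_triangle a b c x y :
  a <> b -> b <> c -> c <> a -> x <> y ->
  let A := bvec a in let B := bvec b in let C := bvec c in
  (0 < bary A B C (bvec x) \/ 0 < bary A B C (bvec y)) ->
  (0 < bary B C A (bvec x) \/ 0 < bary B C A (bvec y)) ->
  (0 < bary C A B (bvec x) \/ 0 < bary C A B (bvec y)) ->
  exists u v, on_geodesic x y u v /\ in_tri_interior a b c u v.
Proof.
  intros Hab Hbc Hca Hxy A B C HC HA HB.
  assert (WAB : 0 < - lorentz A B) by (apply Ropp_0_gt_lt_contravar, lorentz_bvec_neg; assumption).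
  assert (WBC : 0 < - lorentz B C) by (apply Ropp_0_gt_lt_contravar, lorentz_bvec_neg; assumption).
  assert (WCA : 0 < - lorentz C A) by (apply Ropp_0_gt_lt_contravar, lorentz_bvec_neg; assumption).
  destruct (positive_comb_of_circle_coords _ _ _ _ _ _ _ _ _ WAB WBC WCA
              (circle_coords_bvec a b c x) (circle_coords_bvec a b c y) HA HB HC)
    as (l & m & Hl & Hm & PA & PB & PC).
  destruct (comb_geodesic_point x y l m Hxy Hl Hm) as (k & u & v & Hk & Hg & E).
  exists u, v; split; [assumption|].
  apply in_tri_interior_iff; [assumption..|].
  split; [apply Hg|]; unfold inside; rewrite E, !bary_comb; repeat split; nra.
Qed.

Definition fdet (pq rs : Z * Z) : Z :=
  let (p, q) := pq in let (r, s) := rs in (p * s - q * r)%Z.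

Definition fvec (pq : Z * Z) : vec3 :=
  let (p, q) := pq in Vec3 (IZR q * IZR q) (IZR p * IZR q) (IZR p * IZR p).

Lemma farey_adj_fdet a b : farey_adj a b -> Z.abs (fdet a b) = 1%Z.
Proof. destruct a, b; intro H; exact H. Qed.

Lemma fdet_plucker a b c d :
  (fdet a c * fdet b d - fdet a d * fdet b c = fdet a b * fdet c d)%Z.
Proof. destruct a, b, c, d; simpl; ring. Qed.

Lemma fdet_swap a b : fdet b a = (- fdet a b)%Z.
Proof. destruct a, b; simpl; ring. Qed.

Lemma det3_fvec a b c :
  det3 (fvec a) (fvec b) (fvec c) = IZR (fdet a b * fdet b c * fdet c a).
Proof. destruct a, b, c; unfold det3; simpl; rewrite !mult_IZR, !minus_IZR, !mult_IZR; ring. Qed.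

Lemma bvec_vtx pq : farey_pair pq -> exists rho, 0 < rho /\ bvec (vtx pq) = scale rho (fvec pq).
Proof.
  destruct pq as [p q]; simpl; intros [[Hq _]|[-> ->]].
  - rewrite (proj2 (Z.eqb_neq q 0)) by lia.
    assert (0 < IZR q) by (apply IZR_lt; assumption).
    exists (/ (IZR q * IZR q)); split; [apply Rinv_0_lt_compat; nra|].
    unfold scale; simpl; f_equal; field; lra.
  - exists 1; split; [lra|]; unfold scale; simpl; f_equal; ring.
Qed.

Lemma det3_bvec_vtx a b c : farey_pair a -> farey_pair b -> farey_pair c ->
  exists K, 0 < K /\
    det3 (bvec (vtx a)) (bvec (vtx b)) (bvec (vtx c)) = K * IZR (fdet a b * fdet b c * fdet c a).
Proof.
  intros Ha Hb Hc.
  destruct (bvec_vtx a Ha) as (ra & Pa & ->), (bvec_vtx b Hb) as (rb & Pb & ->),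
    (bvec_vtx c Hc) as (rc & Pc & ->).
  exists (ra * rb * rc); split; [repeat apply Rmult_lt_0_compat; assumption|].
  now rewrite det3_scale, det3_fvec.
Qed.

Lemma farey_edges_noncrossing a b c d :
  farey_pair a -> farey_pair b -> farey_pair c -> farey_pair d ->
  farey_adj a b -> farey_adj c d ->
  let A := bvec (vtx a) in let B := bvec (vtx b) in
  0 <= det3 A B (bvec (vtx c)) * det3 A B (bvec (vtx d)).
Proof.
  intros Ha Hb Hc Hd Hab Hcd A B; unfold A, B.
  destruct (det3_bvec_vtx a b c Ha Hb Hc) as (K1 & P1 & ->).
  destruct (det3_bvec_vtx a b d Ha Hb Hd) as (K2 & P2 & ->).
  assert (Hsign : (0 <= fdet a b * fdet b c * fdet c a * (fdet a b * fdet b d * fdet d a))%Z).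
  { pose proof (fdet_plucker a b c d) as Hp.
    apply farey_adj_fdet in Hab; apply farey_adj_fdet in Hcd.
    rewrite (fdet_swap a c), (fdet_swap a d); nia. }
  apply IZR_le in Hsign; rewrite mult_IZR in Hsign.
  replace (K1 * _ * (K2 * _)) with
    (K1 * K2 * (IZR (fdet a b * fdet b c * fdet c a) * IZR (fdet a b * fdet b d * fdet d a)))
    by ring.
  apply Rmult_le_pos; [nra|assumption].
Qed.

Lemma farey_triangle_vtx_distinct a b c : is_farey_triangle a b c ->
  vtx a <> vtx b /\ vtx b <> vtx c /\ vtx c <> vtx a.
Proof.
  intros (Ha & Hb & Hc & Hab & Hbc & Hca).
  assert (Hdet : det3 (bvec (vtx a)) (bvec (vtx b)) (bvec (vtx c)) <> 0).
  { destruct (det3_bvec_vtx a b c Ha Hb Hc) as (K & HK & ->).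
    apply farey_adj_fdet in Hab; apply farey_adj_fdet in Hbc; apply farey_adj_fdet in Hca.
    apply Rmult_integral_contrapositive_currified; [lra|apply eq_IZR_contrapositive; nia]. }
  repeat split; intro E; apply Hdet; rewrite E; unfold det3; ring.
Qed.

Lemma weighted_sum_nonpos g1 g2 g3 h1 h2 h3 :
  0 < h1 -> 0 < h2 -> 0 < h3 -> h1 * g1 + h2 * g2 + h3 * g3 <= 0 ->
  0 <= g1 * g2 -> 0 <= g3 * g1 -> g1 <= 0.
Proof.
  intros; apply Rnot_lt_le; intro.
  assert (0 <= g2) by nra; assert (0 <= g3) by nra; nra.
Qed.

Lemma farey_triangle_one_side a b a' b' c' C Z :
  farey_pair a -> farey_pair b -> farey_adj a b -> is_farey_triangle a' b' c' ->
  let A := bvec (vtx a) in let B := bvec (vtx b) in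
  let A' := bvec (vtx a') in let B' := bvec (vtx b') in let C' := bvec (vtx c') in
  inside A' B' C' Z -> bary A B C Z <= 0 ->
  bary A B C A' <= 0 /\ bary A B C B' <= 0 /\ bary A B C C' <= 0.
Proof.
  intros Ha Hb Hab (Ha' & Hb' & Hc' & Hab' & Hbc' & Hca') A B A' B' C' (HC' & HA' & HB') HZ.
  assert (Hsame : forall V W, 0 <= det3 A B V * det3 A B W ->
                              0 <= bary A B C V * bary A B C W).
  { intros V W H; unfold bary.
    replace (_ * _) with (det3 A B V * det3 A B W * (det3 A B C * det3 A B C)) by ring.
    apply Rmult_le_pos; nra. }
  pose proof (Hsame _ _ (farey_edges_noncrossing a b a' b' Ha Hb Ha' Hb' Hab Hab')).
  pose proof (Hsame _ _ (farey_edges_noncrossing a b b' c' Ha Hb Hb' Hc' Hab Hbc')).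
  pose proof (Hsame _ _ (farey_edges_noncrossing a b c' a' Ha Hb Hc' Ha' Hab Hca')).
  assert (Hsum : bary B' C' A' Z * bary A B C A' + bary C' A' B' Z * bary A B C B'
                 + bary A' B' C' Z * bary A B C C' <= 0).
  { rewrite <- bary_cramer; pose proof (pow2_ge_0 (det3 A' B' C')); nra. }
  set (gA := bary A B C A') in *; set (gB := bary A B C B') in *;
    set (gC := bary A B C C') in *.
  split; [|split].
  - apply (weighted_sum_nonpos gA gB gC (bary B' C' A' Z) (bary C' A' B' Z) (bary A' B' C' Z));
      assumption.
  - apply (weighted_sum_nonpos gB gC gA (bary C' A' B' Z) (bary A' B' C' Z) (bary B' C' A' Z));
      try assumption; lra.
  - apply (weighted_sum_nonpos gC gA gB (bary A' B' C' Z) (bary B' C' A' Z) (bary C' A' B' Z));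
      try assumption; lra.
Qed.

Lemma ladder_vertex_side a b C x y r :
  farey_pair a -> farey_pair b -> farey_adj a b -> x <> y ->
  let A := bvec (vtx a) in let B := bvec (vtx b) in
  bary A B C (bvec x) <= 0 -> bary A B C (bvec y) <= 0 ->
  ladder x y (HBd r) -> bary A B C (bvec r) <= 0.
Proof.
  intros Ha Hb Hab Hxy A B Hx Hy (a' & b' & c' & T' & (u & v & Hg & Hi) & Hr).
  destruct (farey_triangle_vtx_distinct a' b' c' T') as (D1 & D2 & D3).
  apply in_tri_interior_iff in Hi as [_ Hi]; [|assumption..].
  destruct (geodesic_point_comb x y u v Hxy Hg) as (l & m & Hl & Hm & E).
  assert (HZ : bary A B C (hvec u v) <= 0) by (rewrite E, bary_comb; nra).
  destruct (farey_triangle_one_side a b a' b' c' C _ Ha Hb Hab T' Hi HZ) as (R1 & R2 & R3).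
  destruct Hr as [ -> | [ -> | -> ]]; assumption.
Qed.

Lemma ladder_endpoint_side a b C x y r s u v :
  farey_pair a -> farey_pair b -> farey_adj a b -> x <> y -> r <> s ->
  ladder x y (HBd r) -> ladder x y (HBd s) -> on_geodesic r s u v ->
  let A := bvec (vtx a) in let B := bvec (vtx b) in
  0 < bary A B C (hvec u v) ->
  0 < bary A B C (bvec x) \/ 0 < bary A B C (bvec y).
Proof.
  intros Ha Hb Hab Hxy Hrs Lr Ls Hg A B HZ.
  destruct (Rle_or_lt (bary A B C (bvec x)) 0) as [Hx|]; [|now left].
  destruct (Rle_or_lt (bary A B C (bvec y)) 0) as [Hy|]; [|now right].
  exfalso.
  pose proof (ladder_vertex_side a b C x y r Ha Hb Hab Hxy Hx Hy Lr).
  pose proof (ladder_vertex_side a b C x y s Ha Hb Hab Hxy Hx Hy Ls).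
  destruct (geodesic_point_comb r s u v Hrs Hg) as (l & m & Hl & Hm & E).
  rewrite E, bary_comb in HZ; cbv zeta in *; unfold A, B in *; nra.
Qed.

Theorem mainTheorem4 (x y r s : bpt) :
  x <> y ->
  is_farey_vertex r -> is_farey_vertex s -> r <> s ->
  ladder x y (HBd r) -> ladder x y (HBd s) ->
  forall P : hpt, ladder r s P -> ladder x y P.
Proof.
  intros Hxy _ _ Hrs Lr Ls P (a & b & c & T & (u & v & Hg & Hi) & HP).
  exists a, b, c; split; [assumption|split; [|assumption]].
  destruct (farey_triangle_vtx_distinct a b c T) as (Dab & Dbc & Dca).
  apply in_tri_interior_iff in Hi as (_ & Sab & Sbc & Sca); [|assumption..].
  destruct T as (Fa & Fb & Fc & Aab & Abc & Aca).
  apply chord_meets_triangle; [assumption..| | |];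
    eapply (ladder_endpoint_side _ _ _ x y r s u v); eassumption.
Qed.
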